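(* Let $\varphi\colon[\mathbb{F}_2,\mathbb{F}_2]\to\mathbb{Z}$ be the homomorphism defined below. Then $\varphi(g)=\varphi(hgh^{-1})$ for all $g\in[\mathbb{F}_2,\mathbb{F}_2]$ and all $h\in\mathbb{F}_2$.
   Context: $\mathbb{F}_2$ is the free group on $x,y$. Let $\tilde K$ be the graph with vertex set $\mathbb{Z}^2$ and oriented edges $x^iy^jX$ from $(i,j)$ to $(i+1,j)$ and $x^iy^jY$ from $(i,j)$ to $(i,j+1)$ (the universal abelian cover of the wedge of two circles). A $1$-chain is written $\alpha=P_\alpha(x,y)X+Q_\alpha(x,y)Y$ with $P_\alpha,Q_\alpha$ integer Laurent polynomials (the coefficient of $x^iy^j$ in $P_\alpha$ is the coefficient of the edge $x^iy^jX$, similarly for $Q_\alpha$). For $g\in[\mathbb{F}_2,\mathbb{F}_2]$ written as a word in $x^{\pm1},y^{\pm1}$, the associated cycle $\alpha_g$ is the $1$-cycle traced by the lattice path starting at $(0,0)$ in which a letter $x$ (resp. $x^{-1}$, $y$, $y^{-1}$) moves by $(1,0)$ (resp. $(-1,0)$, $(0,1)$, $(0,-1)$) along the corresponding edge, each edge counted with sign $+1$ if traversed in its orientation and $-1$ otherwise; this is a closed path since $g$ has zero exponent sums, and its homology class depends only on $g$. Let $f_\alpha(y)=P_\alpha(1,y)$. Define $\varphi(g)=f_{\alpha_g}'(1)$; this is a homomorphism $[\mathbb{F}_2,\mathbb{F}_2]\to\mathbb{Z}$ (e.g. $\alpha_{[x,y]}=(1-y)X+(x-1)Y$ and $\varphi([x,y])=-1$,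 where $[g,h]=ghg^{-1}h^{-1}$). *)

From mathcomp Require Import all_boot all_order all_algebra.
Set Implicit Arguments. Unset Strict Implicit. Unset Printing Implicit Defensive.
Import GRing.Theory Num.Theory.
Local Open Scope ring_scope.

Inductive letter := Lx | Lxi | Ly | Lyi.
Definition word := seq letter.

(* Group operations on words (words represent elements of F_2; the
   product is concatenation and the inverse is reversed inverted letters). *)
Definition inv_letter (l : letter) : letter :=
  match l with Lx => Lxi | Lxi => Lx | Ly => Lyi | Lyi => Ly end.
Definition winv (w : word) : word := rev (map inv_letter w).

(* Exponent sums; g in [F_2,F_2] iff both vanish (kernel of abelianization). *)
Definition letter_ex (l : letter) : int :=
  match l with Lx => 1 | Lxi => -1 | _ => 0 end.
Definition letter_ey (l : letter) : int :=
  match l with Ly => 1 | Lyi => -1 | _ => 0 end.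
Definition exp_x (w : word) : int := \sum_(l <- w) letter_ex l.
Definition exp_y (w : word) : int := \sum_(l <- w) letter_ey l.
Definition in_commutator (w : word) : Prop := exp_x w = 0 /\ exp_y w = 0.

(* Oriented edges of the lattice graph: x^i y^j X (isX = true) from (i,j) to
   (i+1,j), and x^i y^j Y (isX = false) from (i,j) to (i,j+1). *)
Record edge := Edge { e_i : int; e_j : int; e_isX : bool }.

Definition chain := seq (edge * int).

Definition letter_edge (i j : int) (l : letter) : edge * int :=
  match l with
  | Lx => (Edge i j true, 1)
  | Lxi => (Edge (i - 1) j true, -1)
  | Ly => (Edge i j false, 1)
  | Lyi => (Edge i (j - 1) false, -1)
  end.

Fixpoint path_chain (i j : int) (w : word) : chain :=
  match w with
  | [::] => [::]
  | l :: w' => letter_edge i j l :: path_chain (i + letter_ex l) (j + letter_ey l) w'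
  end.

Definition alpha (g : word) : chain := path_chain 0 0 g.

(* Coefficient of x^i y^j in P_alpha (coefficient of the edge x^i y^j X). *)
Definition P_coef (a : chain) (i j : int) : int :=
  \sum_(c <- a | [&& e_i c.1 == i, e_j c.1 == j & e_isX c.1]) c.2.

(* f_alpha(y) = P_alpha(1,y) = sum_j (sum_i P_coef a i j) y^j, a Laurent
   polynomial in y; its derivative at y = 1 is sum_j j * (sum_i P_coef a i j).
   Since a is a finite formal sum, this equals the sum over the X-edge terms
   of the chain of (height j) * (coefficient). *)
Definition f_deriv_at1 (a : chain) : int :=
  \sum_(c <- a | c.1.(e_isX)) c.1.(e_j) * c.2.

Definition phi (g : word) : int := f_deriv_at1 (alpha g).

From mathcomp Require Import all_boot all_order all_algebra.
From mathcomp Require Import ring.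
Local Open Scope ring_scope.
Import GRing.Theory.

(* phi(g) is the sum, over the x-steps of the lattice path of g, of the signed
   height at which the step is taken.  Starting the path at height j instead of
   0 adds j times the x-exponent sum, which vanishes on [F_2,F_2]; and the path
   of h^-1 retraces the path of h backwards, so their contributions cancel. *)

Definition letter_x_moment (l : letter) (j : int) : int :=
  match l with Lx => j | Lxi => - j | _ => 0 end.

Fixpoint x_moment (j : int) (w : word) : int :=
  if w is l :: w' then letter_x_moment l j + x_moment (j + letter_ey l) w'
  else 0.

Lemma f_deriv_at1_path_chain (i j : int) (w : word) :
  f_deriv_at1 (path_chain i j w) = x_moment j w.
Proof.
elim: w i j => [|l w IHw] i j; first by rewrite /f_deriv_at1 big_nil.
rewrite /f_deriv_at1 /= big_cons -/(f_deriv_at1 _) IHw.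
by case: l => /=; rewrite ?mulr1 ?mulrN1 ?add0r.
Qed.

Lemma phiE (g : word) : phi g = x_moment 0 g.
Proof. exact: f_deriv_at1_path_chain. Qed.

Lemma exp_x_cons (l : letter) (w : word) :
  exp_x (l :: w) = letter_ex l + exp_x w.
Proof. exact: big_cons. Qed.

Lemma exp_y_cons (l : letter) (w : word) :
  exp_y (l :: w) = letter_ey l + exp_y w.
Proof. exact: big_cons. Qed.

Lemma exp_y_winv (w : word) : exp_y (winv w) = - exp_y w.
Proof.
rewrite /exp_y /winv big_rev big_map -sumrN.
by apply: eq_bigr => -[].
Qed.

Lemma winv_cons (l : letter) (w : word) :
  winv (l :: w) = winv w ++ [:: inv_letter l].
Proof. by rewrite /winv /= rev_cons cats1. Qed.

Lemma x_moment_cat (j : int) (u v : word) :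
  x_moment j (u ++ v) = x_moment j u + x_moment (j + exp_y u) v.
Proof.
elim: u j => [|l u IHu] j /=; first by rewrite /exp_y big_nil addr0 add0r.
by rewrite IHu exp_y_cons !addrA.
Qed.

Lemma x_moment_shift (j : int) (w : word) :
  x_moment j w = x_moment 0 w + j * exp_x w.
Proof.
elim: w j => [|l w IHw] j /=; first by rewrite /exp_x big_nil mulr0 addr0.
rewrite IHw [x_moment (0 + _) w]IHw exp_x_cons.
by case: l => /=; ring.
Qed.

Lemma x_moment_winv (j : int) (w : word) :
  x_moment (j + exp_y w) (winv w) = - x_moment j w.
Proof.
elim: w j => [|l w IHw] j /=; first by rewrite oppr0.
rewrite winv_cons x_moment_cat exp_y_winv exp_y_cons.
rewrite (addrA j) IHw addrK /=.
by case: l => /=; ring.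
Qed.

Theorem lemma2p2 (g h : word) :
  in_commutator g -> phi (h ++ g ++ winv h) = phi g.
Proof.
case=> exp_x_g exp_y_g.
rewrite !phiE !x_moment_cat !add0r exp_y_g addr0.
rewrite (x_moment_shift (exp_y h) g) exp_x_g mulr0 addr0.
have := x_moment_winv 0 h; rewrite add0r => ->.
by rewrite addrC subrK.
Qed.
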